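(* Consider a network $N$ with service-vector set $\mathcal{S}$ and routing matrix $R$. Fix $w\in\mathbb{R}_{++}^n$, an arrival function $A(\cdot)$, and $\lambda\in\mathbb{R}_+^n$. Let $Q(\cdot)$ be a queue length process of $N$ driven by $A(\cdot)$ under a $w$-WMW policy. Let $W=\mathrm{diag}(w)$, $\tilde\lambda=W^{1/2}\lambda$, $\tilde A(t)=W^{1/2}A(t)$ for $t\in\mathbb{Z}_+$, and let $\tilde N$ be the network with service-vector set $\tilde{\mathcal{S}}=W^{1/2}\mathcal{S}$ and routing matrix $\tilde R=W^{1/2}RW^{-1/2}$. Then: (a) $\tilde Q(t)=W^{1/2}Q(t)$ is a queue length process of $\tilde N$ driven by $\tilde A(\cdot)$ under a MW policy; (b) $\tilde q(t)=W^{1/2}q(t)$ is a fluid solution of $\tilde N$ for arrival rate $\tilde\lambda$ and unit weights if and only if $q(\cdot)$ is a fluid solution of $N$ for arrival rate $\lambda$ and weights $w$.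
   Context: A network consists of $n$ queues, a routing matrix $R\in\mathbb{R}^{n\times n}$ with nonnegative entries, and a finite set $\mathcal{S}\subset\mathbb{R}_+^n$ of service vectors. A queue length process driven by $A:\mathbb{Z}_+\to\mathbb{R}_+^n$ evolves by $Q(t+1)=Q(t)+A(t)+(R-I)\min(\mu(t),Q(t))$ (componentwise min), $\mu(t)\in\mathcal{S}$. For weights $w\in\mathbb{R}_{++}^n$, $\mathcal{S}_w(x)=\arg\max_{\mu\in\mathcal{S}}x^T\mathrm{diag}(w)(I-R)\mu$; the $w$-WMW policy chooses $\mu(t)\in\mathcal{S}_w(Q(t))$ arbitrarily; MW is $w=(1,\dots,1)$. A fluid solution for $\lambda\in\mathbb{R}_+^n$ and weights $w$ is an absolutely continuous $q:\mathbb{R}_+\to\mathbb{R}_+^n$ for which there exist $s_\mu:\mathbb{R}_+\to[0,1]$ ($\mu\in\mathcal{S}$) and $y:\mathbb{R}_+\to\mathbb{R}_+^n$ with, for a.e. $t$: $\dot q(t)=\lambda+(R-I)(\sum_\mu s_\mu(t)\mu-y(t))$, $\sum_\mu s_\mu(t)=1$, $y_i(t)\le\sum_\mu s_\mu(t)\mu_i$, $q_i(t)>0\Rightarrow y_i(t)=0$, $\mu\notin\mathcal{S}_w(q(t))\Rightarrow s_\mu(t)=0$. $W^{1/2}\mathcal{S}=\{W^{1/2}\mu:\mu\in\mathcal{S}\}$. *)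

From HB Require Import structures.
From mathcomp Require Import all_boot all_order all_algebra finmap.
From mathcomp Require Import all_classical all_reals all_analysis.
Set Implicit Arguments. Unset Strict Implicit. Unset Printing Implicit Defensive.
Import Order.TTheory GRing.Theory Num.Theory.
Import numFieldNormedType.Exports.
Local Open Scope ring_scope.

Section Defs.
Variables (K : realType) (n : nat).

Definition nonneg_vec (x : 'cV[K]_n) : Prop := forall i, 0 <= x i 0.
Definition pos_vec (x : 'cV[K]_n) : Prop := forall i, 0 < x i 0.

Definition Wmx (w : 'cV[K]_n) : 'M[K]_n := diag_mx (w^T).
Definition Whalf (w : 'cV[K]_n) : 'M[K]_n := diag_mx (\row_i Num.sqrt (w i 0)).
Definition Wmhalf (w : 'cV[K]_n) : 'M[K]_n := diag_mx (\row_i (Num.sqrt (w i 0))^-1).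

(* unit weights (MW policy) *)
Definition unit_w : 'cV[K]_n := const_mx 1.

Definition wobj (R : 'M[K]_n) (w x mu : 'cV[K]_n) : K :=
  (x^T *m Wmx w *m (1%:M - R) *m mu) 0 0.

Definition in_Sw (S : {fset 'cV[K]_n}) (R : 'M[K]_n) (w x mu : 'cV[K]_n) : Prop :=
  mu \in S /\ forall nu, nu \in S -> wobj R w x nu <= wobj R w x mu.

Definition minv (x y : 'cV[K]_n) : 'cV[K]_n := \col_i Num.min (x i 0) (y i 0).

Definition wmw_process (S : {fset 'cV[K]_n}) (R : 'M[K]_n) (w : 'cV[K]_n)
  (A Q : nat -> 'cV[K]_n) : Prop :=
  nonneg_vec (Q 0%N) /\
  exists mu : nat -> 'cV[K]_n,
    forall t : nat, in_Sw S R w (Q t) (mu t) /\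
      Q (t.+1) = Q t + A t + (R - 1%:M) *m minv (mu t) (Q t).

Definition abs_cont_on (a b : K) (f : K -> K) : Prop :=
  forall e : K, 0 < e -> exists2 d : K, 0 < d &
    forall (m : nat) (x y : 'I_m -> K),
      (forall k, a <= x k /\ x k <= y k /\ y k <= b) ->
      (forall k l : 'I_m, (k < l)%N -> y k <= x l) ->
      \sum_k (y k - x k) < d ->
      \sum_k `|f (y k) - f (x k)| < e.

Definition abs_cont_Rplus (f : K -> K) : Prop :=
  forall T : K, 0 <= T -> abs_cont_on 0 T f.

Definition fluid_solution (S : {fset 'cV[K]_n}) (R : 'M[K]_n) (lam w : 'cV[K]_n)
  (q : K -> 'cV[K]_n) : Prop :=
  (forall t, 0 <= t -> nonneg_vec (q t)) /\
  (forall i, abs_cont_Rplus (fun t => q t i 0)) /\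
  exists (s : 'cV[K]_n -> K -> K) (y : K -> 'cV[K]_n),
    (forall mu t, mu \in S -> 0 <= t -> 0 <= s mu t <= 1) /\
    (forall t, 0 <= t -> nonneg_vec (y t)) /\
    {ae (@lebesgue_measure K), forall t : K, 0 <= t ->
      (forall i, is_derive t 1 (fun u => q u i 0)
         ((lam + (R - 1%:M) *m (\sum_(mu <- S) s mu t *: mu - y t)) i 0)) /\
      \sum_(mu <- S) s mu t = 1 /\
      (forall i, y t i 0 <= (\sum_(mu <- S) s mu t *: mu) i 0) /\
      (forall i, 0 < q t i 0 -> y t i 0 = 0) /\
      (forall mu, mu \in S -> ~ in_Sw S R w (q t) mu -> s mu t = 0)}.

End Defs.

From HB Require Import structures.
From mathcomp Require Import all_boot all_order all_algebra finmap.
From mathcomp Require Import all_classical all_reals all_analysis.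
Import Order.TTheory GRing.Theory Num.Theory.
Import numFieldNormedType.Exports.
Local Open Scope ring_scope.

(* W^{1/2} is a diagonal change of coordinates with positive entries.  It
   commutes with the componentwise min, turns R into R~ = W^{1/2} R W^{-1/2},
   and x^T W (I - R) mu = (W^{1/2} x)^T (I - R~) (W^{1/2} mu), so it maps the
   argmax sets S_w(x) onto the unweighted argmax sets of the scaled network.
   Every fluid condition is linear in q or a sign condition, hence preserved
   by positive scaling; the multipliers s_mu are relabelled along
   mu |-> W^{1/2} mu and the idling term y is scaled by W^{1/2}. *)

Section PositiveScaling.
Context {K : realType}.

Lemma abs_cont_Rplus_scale (c : K) (f : K -> K) : 0 < c ->
  abs_cont_Rplus f -> abs_cont_Rplus (fun t => c * f t).
Proof.
move=> c_gt0 f_ac T T_ge0 e e_gt0.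
have [d d_gt0 fd] := f_ac T T_ge0 (e / c) (divr_gt0 e_gt0 c_gt0).
exists d => // m x y xy_in xy_sorted xy_small.
have := fd m x y xy_in xy_sorted xy_small; rewrite ltr_pdivlMr // mulr_suml.
congr (_ < _); apply: eq_bigr => k _.
by rewrite -mulrBr normrM (gtr0_norm c_gt0) mulrC.
Qed.

Lemma abs_cont_Rplus_scaleE (c : K) (f : K -> K) : 0 < c ->
  abs_cont_Rplus (fun t => c * f t) <-> abs_cont_Rplus f.
Proof.
move=> c_gt0; split; last exact: abs_cont_Rplus_scale.
have cV_gt0 : 0 < c^-1 by rewrite invr_gt0.
move=> /(abs_cont_Rplus_scale _ _ cV_gt0).
by under eq_fun do rewrite mulrA mulVf ?gt_eqF // mul1r.
Qed.

Lemma is_derive_scaleE (c : K) (f : K -> K) (x df : K) :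
  c != 0 -> is_derive x 1 (fun u => c * f u) (c * df) <-> is_derive x 1 f df.
Proof.
move=> c_neq0; split; last exact: is_deriveZ.
move=> /(is_deriveZ c^-1); rewrite [_ *: (c * df)]mulKf //.
by under [_ \*: _]eq_fun do rewrite /= [_ *: _]mulKf //.
Qed.

End PositiveScaling.

Section FluidRate.
Context {K : realType} {n : nat}.

Definition fluid_rate_cond (S : {fset 'cV[K]_n}) (R : 'M[K]_n) (lam w : 'cV[K]_n)
    (q : K -> 'cV[K]_n) (s : 'cV[K]_n -> K -> K) (y : K -> 'cV[K]_n) (t : K) : Prop :=
  (forall i, is_derive t 1 (fun u => q u i 0)
     ((lam + (R - 1%:M) *m (\sum_(mu <- S) s mu t *: mu - y t)) i 0)) /\
  \sum_(mu <- S) s mu t = 1 /\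
  (forall i, y t i 0 <= (\sum_(mu <- S) s mu t *: mu) i 0) /\
  (forall i, 0 < q t i 0 -> y t i 0 = 0) /\
  (forall mu, mu \in S -> ~ in_Sw S R w (q t) mu -> s mu t = 0).

End FluidRate.

Section ScaledNetwork.
Variables (K : realType) (n : nat) (w : 'cV[K]_n).
Hypothesis w_gt0 : pos_vec w.

Local Notation D := (Whalf w).
Local Notation Dinv := (Wmhalf w).
Local Notation sqrtw i := (Num.sqrt (w i 0)).

Lemma sqrtw_gt0 i : 0 < sqrtw i.
Proof. by rewrite sqrtr_gt0 w_gt0. Qed.

Lemma sqrtw_neq0 i : sqrtw i != 0.
Proof. by rewrite gt_eqF ?sqrtw_gt0. Qed.

Lemma Whalf_mulE m (M : 'M[K]_(n, m)) i j : (D *m M) i j = sqrtw i * M i j.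
Proof. by rewrite mul_diag_mx !mxE. Qed.

Lemma Wmhalf_mulE m (M : 'M[K]_(n, m)) i j : (Dinv *m M) i j = (sqrtw i)^-1 * M i j.
Proof. by rewrite mul_diag_mx !mxE. Qed.

Lemma Whalf_mulK m (M : 'M[K]_(n, m)) : Dinv *m (D *m M) = M.
Proof.
by apply/matrixP => i j; rewrite Wmhalf_mulE Whalf_mulE mulKf ?sqrtw_neq0.
Qed.

Lemma Wmhalf_mulK m (M : 'M[K]_(n, m)) : D *m (Dinv *m M) = M.
Proof.
by apply/matrixP => i j; rewrite Whalf_mulE Wmhalf_mulE mulVKf ?sqrtw_neq0.
Qed.

Lemma Whalf_inj : injective (fun v : 'cV[K]_n => D *m v).
Proof. exact: (can_inj (@Whalf_mulK 1)). Qed.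

Lemma Whalf_sqr : D *m D = Wmx w.
Proof.
apply/matrixP => i j; rewrite Whalf_mulE !mxE.
have [->|_] := eqVneq i j; last by rewrite !mulr0n mulr0.
by rewrite !mulr1n -expr2 sqr_sqrtr // ltW ?w_gt0.
Qed.

Lemma conj_routing_subr1 (R : 'M[K]_n) (v : 'cV[K]_n) :
  (D *m R *m Dinv - 1%:M) *m (D *m v) = D *m ((R - 1%:M) *m v).
Proof. by rewrite !mulmxBl !mul1mx mulmxBr -!mulmxA Whalf_mulK. Qed.

Lemma wobj_Whalf (R : 'M[K]_n) (x mu : 'cV[K]_n) :
  wobj (D *m R *m Dinv) (unit_w K n) (D *m x) (D *m mu) = wobj R w x mu.
Proof.
have W1 : Wmx (unit_w K n) = 1%:M by rewrite /Wmx trmx_const diag_const_mx.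
have trD : D^T = D by rewrite tr_diag_mx.
rewrite /wobj W1 mulmx1 trmx_mul trD -!mulmxA !mulmxBl !mul1mx mulmxBr.
by rewrite -!mulmxA Whalf_mulK !mulmxA Whalf_sqr -!mulmxA -mulmxBr.
Qed.

Lemma minv_Whalf (a b : 'cV[K]_n) : minv (D *m a) (D *m b) = D *m minv a b.
Proof.
apply/matrixP => i j; rewrite (ord1 j) Whalf_mulE /minv [LHS]mxE [in RHS]mxE !Whalf_mulE.
by rewrite minr_pMr // ltW ?sqrtw_gt0.
Qed.

Lemma nonneg_Whalf (x : 'cV[K]_n) : nonneg_vec (D *m x) <-> nonneg_vec x.
Proof.
by split=> x_ge0 i; have := x_ge0 i; rewrite ?Whalf_mulE pmulr_rge0 ?sqrtw_gt0.
Qed.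

Variable S : {fset 'cV[K]_n}.
Local Notation St := [fset D *m mu | mu in S]%fset.

Lemma mem_Whalf_fset mu : (D *m mu \in St) = (mu \in S).
Proof. exact/mem_imfset/Whalf_inj. Qed.

Lemma big_Whalf_fset (V : nmodType) (F : 'cV[K]_n -> V) :
  \sum_(mu <- St) F mu = \sum_(mu <- S) F (D *m mu).
Proof. by rewrite big_imfset // => x y _ _; apply: Whalf_inj. Qed.

Lemma in_Sw_Whalf (R : 'M[K]_n) (x mu : 'cV[K]_n) :
  in_Sw St (D *m R *m Dinv) (unit_w K n) (D *m x) (D *m mu) <-> in_Sw S R w x mu.
Proof.
rewrite /in_Sw mem_Whalf_fset; split=> -[mu_in mu_max]; split=> // nu.
  by move=> nu_in; rewrite -!wobj_Whalf mu_max ?mem_Whalf_fset.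
by case/imfsetP => {}nu /= nu_in ->; rewrite !wobj_Whalf mu_max.
Qed.

Lemma wmw_process_Whalf (R : 'M[K]_n) (A Q : nat -> 'cV[K]_n) :
  wmw_process S R w A Q ->
  wmw_process St (D *m R *m Dinv) (unit_w K n)
    (fun t => D *m A t) (fun t => D *m Q t).
Proof.
move=> [Q0_ge0 [mu Qmu]]; split; first exact/nonneg_Whalf.
exists (fun t => D *m mu t) => t; have [mu_opt Qstep] := Qmu t; split.
  exact/in_Sw_Whalf.
by rewrite Qstep minv_Whalf conj_routing_subr1 !mulmxDr.
Qed.

Variables (R : 'M[K]_n) (lam : 'cV[K]_n).
Local Notation Rt := (D *m R *m Dinv).

Lemma fluid_rate_cond_Whalf (q : K -> 'cV[K]_n) (s s' : 'cV[K]_n -> K -> K)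
    (y y' : K -> 'cV[K]_n) (t : K) :
  (forall mu, mu \in S -> s' (D *m mu) t = s mu t) -> y' t = D *m y t ->
  fluid_rate_cond St Rt (D *m lam) (unit_w K n) (fun u => D *m q u) s' y' t <->
  fluid_rate_cond S R lam w q s y t.
Proof.
move=> s's y'y; rewrite /fluid_rate_cond.
set serv := \sum_(mu <- S) s mu t *: mu.
have -> : \sum_(mu <- St) s' mu t *: mu = D *m serv.
  rewrite big_Whalf_fset mulmx_sumr !big_seq.
  by apply: eq_bigr => mu mu_in; rewrite s's // scalemxAr.
have -> : \sum_(mu <- St) s' mu t = \sum_(mu <- S) s mu t.
  by rewrite big_Whalf_fset !big_seq; apply: eq_bigr => mu mu_in; rewrite s's.
rewrite y'y -mulmxBr conj_routing_subr1 -mulmxDr.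
have scaled_fun i : (fun u => (D *m q u) i 0) = (fun u => sqrtw i * q u i 0).
  by apply: funext => u; rewrite Whalf_mulE.
have s'_opt mu : mu \in S ->
    (~ in_Sw St Rt (unit_w K n) (D *m q t) (D *m mu) -> s' (D *m mu) t = 0) <->
    (~ in_Sw S R w (q t) mu -> s mu t = 0).
  by move=> mu_in; rewrite in_Sw_Whalf s's.
split=> -[dq [sum1 [y_le [y_idle s_opt]]]];
  (split; [|split; [|split; [|split]]]) => //.
- by move=> i; have := dq i; rewrite scaled_fun Whalf_mulE is_derive_scaleE ?sqrtw_neq0.
- by move=> i; have := y_le i; rewrite !Whalf_mulE ler_pM2l ?sqrtw_gt0.
- move=> i q_gt0; apply/eqP; have := y_idle i; rewrite !Whalf_mulE.
  by rewrite pmulr_rgt0 ?sqrtw_gt0 // => /(_ q_gt0) /eqP; rewrite mulf_eq0 (negPf (sqrtw_neq0 i)).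
- by move=> mu mu_in; apply/s'_opt/s_opt; rewrite ?mem_Whalf_fset.
- by move=> i; rewrite scaled_fun Whalf_mulE is_derive_scaleE ?sqrtw_neq0.
- by move=> i; rewrite !Whalf_mulE ler_pM2l ?sqrtw_gt0.
- by move=> i; rewrite !Whalf_mulE pmulr_rgt0 ?sqrtw_gt0 // => /y_idle ->; rewrite mulr0.
- by move=> _ /imfsetP [mu /= mu_in ->]; apply/s'_opt/s_opt.
Qed.

Lemma fluid_solution_Whalf (q : K -> 'cV[K]_n) :
  fluid_solution St Rt (D *m lam) (unit_w K n) (fun t => D *m q t) <->
  fluid_solution S R lam w q.
Proof.
have ae_filter := ae_filter_ringOfSetsType (@lebesgue_measure K).
have ac_iff i : abs_cont_Rplus (fun t => (D *m q t) i 0) <-> abs_cont_Rplus (fun t => q t i 0).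
  by under eq_fun do rewrite Whalf_mulE; apply: abs_cont_Rplus_scaleE; apply: sqrtw_gt0.
split=> -[q_ge0 [q_ac [s [y [s_01 [y_ge0 q_rate]]]]]]; (split; [|split]).
- by move=> t t_ge0; apply/nonneg_Whalf/q_ge0.
- by move=> i; apply/ac_iff/q_ac.
- exists (fun mu t => s (D *m mu) t), (fun t => Dinv *m y t); split; [|split].
  + by move=> mu t mu_in; apply: s_01; rewrite mem_Whalf_fset.
  + by move=> t t_ge0; apply/nonneg_Whalf; rewrite Wmhalf_mulK; apply: y_ge0.
  + apply: filterS q_rate => t rate_t t_ge0.
    apply: (fluid_rate_cond_Whalf q (fun mu t => s (D *m mu) t) s
      (fun t => Dinv *m y t) y t (fun _ _ => erefl) (esym (Wmhalf_mulK _ _))).1.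
    exact: rate_t.
- by move=> t t_ge0; apply/nonneg_Whalf/q_ge0.
- by move=> i; apply/ac_iff/q_ac.
- exists (fun mu t => s (Dinv *m mu) t), (fun t => D *m y t); split; [|split].
  + by move=> _ t /imfsetP [mu /= mu_in ->]; rewrite Whalf_mulK; apply: s_01.
  + by move=> t t_ge0; apply/nonneg_Whalf/y_ge0.
  + apply: filterS q_rate => t rate_t t_ge0.
    have s_relabel mu : mu \in S -> s (Dinv *m (D *m mu)) t = s mu t
      by rewrite Whalf_mulK.
    apply: (fluid_rate_cond_Whalf q s (fun mu t => s (Dinv *m mu) t)
      y (fun t => D *m y t) t s_relabel erefl).2.
    exact: rate_t.
Qed.

End ScaledNetwork.

Theorem lemma4 (K : realType) (n : nat) (S : {fset 'cV[K]_n}) (R : 'M[K]_n)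
  (w : 'cV[K]_n) (A : nat -> 'cV[K]_n) (lam : 'cV[K]_n) :
  (forall i j, 0 <= R i j) ->
  (forall mu, mu \in S -> nonneg_vec mu) ->
  pos_vec w ->
  (forall t, nonneg_vec (A t)) ->
  nonneg_vec lam ->
  let St := [fset Whalf w *m mu | mu in S]%fset in
  let Rt := Whalf w *m R *m Wmhalf w in
  let At := fun t => Whalf w *m A t in
  let lamt := Whalf w *m lam in
  (forall Q : nat -> 'cV[K]_n, wmw_process S R w A Q ->
     wmw_process St Rt (unit_w K n) At (fun t => Whalf w *m Q t)) /\
  (forall q : K -> 'cV[K]_n,
     fluid_solution St Rt lamt (unit_w K n) (fun t => Whalf w *m q t) <->
     fluid_solution S R lam w q).
Proof.
move=> _ _ w_gt0 _ _ St Rt At lamt; split=> [Q|q].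
  exact: wmw_process_Whalf.
exact: fluid_solution_Whalf.
Qed.
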